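(* Let $T>0$ and constants $K_1\ge0$, $K_2\ne0$ with $K_1+K_2\ge0$; put $\beta=K_1/K_2$ and, for $t\in[0,T]$, $$\Lambda(t,T)=1+\frac{K_1}{K_2}\Big(1-e^{-\frac{K_2(T-t)}{2}}\Big)+\frac{K_1}{K_2}\Big(1-e^{-\frac{K_2t}{2}}\Big)+\Big(\frac{K_1}{K_2}\Big)^2\Big[\Big(1-e^{-\frac{K_2t}{2}}\Big)+\frac12\Big(e^{-\frac{K_2(T+t)}{2}}-e^{-\frac{K_2(T-t)}{2}}\Big)\Big].$$ (i) If $K_2>0$, then, writing $S=\sqrt{1+\frac{\beta}{2+\beta}\big(1-e^{-\frac{K_2T}{2}}\big)}$, $$\sup_{t\in[0,T]}\Lambda(t,T)=(1+\beta)^2-\Big(\beta+\frac{\beta^2}{2}\Big)S\,e^{-\frac{K_2T}{4}}-\frac{\beta+\beta^2-\frac{\beta^2}{2}e^{-\frac{K_2T}{2}}}{S}\,e^{-\frac{K_2T}{4}}.$$ (ii) If $K_2<0$, then $$\sup_{t\in[0,T]}\Lambda(t,T)=\frac12+\frac12\Big(1+\frac{K_1}{K_2}\Big[1-e^{-\frac{K_2T}{2}}\Big]\Big)^2.$$ *)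

From Stdlib Require Import Reals.
Open Scope R_scope.

Definition Lambda (K1 K2 T t : R) : R :=
  1 + (K1 / K2) * (1 - exp (- (K2 * (T - t) / 2)))
    + (K1 / K2) * (1 - exp (- (K2 * t / 2)))
    + (K1 / K2) ^ 2 *
      ((1 - exp (- (K2 * t / 2)))
       + / 2 * (exp (- (K2 * (T + t) / 2)) - exp (- (K2 * (T - t) / 2)))).

Definition Lambda_range (K1 K2 T : R) : R -> Prop :=
  fun y => exists t, 0 <= t <= T /\ y = Lambda K1 K2 T t.

(** With [x = exp (-K2 t / 2)] and [a = exp (-K2 T / 2)], the function
    [Lambda] becomes [(1 + b)^2 - A x - a c / x] with [b = K1 / K2],
    [c = b + b^2/2] and [A = b + b^2 - b^2 a / 2], and [t] ranges over [[0,T]]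
    exactly when [x] ranges between [1] and [a].  For [K2 > 0] one has
    [A = c S^2] and [a = r^2] with [r = exp (-K2 T / 4)], so by AM-GM
    [A x + a c / x >= 2 c S r], with equality at [x = r / S], which lies in
    [[a, 1]].  For [K2 < 0] the difference between the value at [x = a] and
    at [x] is [(a - x) (c - A x) / x]; the affine factor [c - A x] is
    nonnegative at [x = 1] and [x = a], so the maximum is attained at [t = T]. *)

From Stdlib Require Import Reals Lra Psatz.
Open Scope R_scope.

Lemma exp_le_iff u v : exp u <= exp v <-> u <= v.
Proof.
  split; intros H.
  - destruct (Rle_or_lt u v) as [|Hvu]; [assumption|].
    apply exp_increasing in Hvu; lra.
  - destruct H as [H | ->]; [left; apply exp_increasing|]; lra.
Qed.

Lemma exp_decay_range_neg K T t :
  K < 0 -> 0 <= t <= T -> 1 <= exp (- (K * t / 2)) <= exp (- (K * T / 2)).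
Proof.
  intros HK Ht; rewrite <- exp_0, !exp_le_iff; split; nra.
Qed.

Lemma exp_decay_onto K T x :
  0 < K -> exp (- (K * T / 2)) <= x <= 1 ->
  exists t, 0 <= t <= T /\ exp (- (K * t / 2)) = x.
Proof.
  intros HK Hx.
  assert (Hx0 : 0 < x) by (pose proof (exp_pos (- (K * T / 2))); lra).
  exists (-2 * ln x / K).
  assert (Hexp : exp (- (K * (-2 * ln x / K) / 2)) = x).
  { replace (- (K * (-2 * ln x / K) / 2)) with (ln x) by (field; lra).
    exact (exp_ln x Hx0). }
  rewrite <- exp_0, <- Hexp, !exp_le_iff in Hx.
  split; [split; nra | exact Hexp].
Qed.

Lemma Lambda_range_lub K1 K2 T M :
  (forall t, 0 <= t <= T -> Lambda K1 K2 T t <= M) ->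
  (exists t, 0 <= t <= T /\ Lambda K1 K2 T t = M) ->
  is_lub (Lambda_range K1 K2 T) M.
Proof.
  intros Hle [t0 [Ht0 Heq]]; split.
  - intros y [t [Ht ->]]; exact (Hle t Ht).
  - intros b Hb; rewrite <- Heq; apply Hb; exists t0; auto.
Qed.

Definition Lambda_profile (b a x : R) : R :=
  (1 + b) ^ 2 - (b + b ^ 2 - b ^ 2 / 2 * a) * x - a * (b + b ^ 2 / 2) / x.

Lemma Lambda_profileE K1 K2 T t : K2 <> 0 ->
  Lambda K1 K2 T t =
  Lambda_profile (K1 / K2) (exp (- (K2 * T / 2))) (exp (- (K2 * t / 2))).
Proof.
  intros HK2.
  assert (Ediff : exp (- (K2 * (T - t) / 2))
                  = exp (- (K2 * T / 2)) * / exp (- (K2 * t / 2))).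
  { rewrite <- exp_Ropp, <- exp_plus; f_equal; field. }
  assert (Esum : exp (- (K2 * (T + t) / 2))
                 = exp (- (K2 * T / 2)) * exp (- (K2 * t / 2))).
  { rewrite <- exp_plus; f_equal; field. }
  pose proof (exp_pos (- (K2 * t / 2))).
  unfold Lambda, Lambda_profile; rewrite Ediff, Esum; field; lra.
Qed.

Lemma amgm_inv s r x : 0 < x -> 2 * s * r <= s ^ 2 * x + r ^ 2 / x.
Proof.
  intros Hx.
  assert (E : s ^ 2 * x + r ^ 2 / x - 2 * s * r = (s * x - r) ^ 2 / x)
    by (field; lra).
  assert (0 <= (s * x - r) ^ 2 / x)
    by (apply Rmult_le_pos; [apply pow2_ge_0 | left; apply Rinv_0_lt_compat; lra]).
  lra.
Qed.

Section DecayingCase.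

Variables b s r : R.
Hypothesis Hb : 0 <= b.
Hypothesis Hr : 0 < r.
Hypothesis Hs : 0 < s.
Hypothesis Hs2 : s ^ 2 = 1 + b / (2 + b) * (1 - r ^ 2).

Let c := b + b ^ 2 / 2.

Lemma Lambda_profile_amgm x : 0 < x ->
  Lambda_profile b (r ^ 2) x = (1 + b) ^ 2 - c * (s ^ 2 * x + r ^ 2 / x).
Proof.
  intros Hx; unfold Lambda_profile, c; rewrite Hs2; field; lra.
Qed.

Lemma Lambda_profile_le_peak x : 0 < x ->
  Lambda_profile b (r ^ 2) x <= (1 + b) ^ 2 - 2 * c * s * r.
Proof.
  intros Hx; rewrite Lambda_profile_amgm by exact Hx.
  pose proof (amgm_inv s r x Hx).
  assert (0 <= c) by (unfold c; nra).
  nra.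
Qed.

Lemma Lambda_profile_peak :
  Lambda_profile b (r ^ 2) (r / s) = (1 + b) ^ 2 - 2 * c * s * r.
Proof.
  rewrite Lambda_profile_amgm by (apply Rdiv_lt_0_compat; lra).
  field; lra.
Qed.

Lemma peak_in_range : r <= 1 -> r ^ 2 <= r / s <= 1.
Proof.
  intros Hr1.
  assert (Hf0 : 0 <= b / (2 + b)) by (apply Rle_mult_inv_pos; lra).
  assert (Hf1 : b / (2 + b) <= 1)
    by (apply Rmult_le_reg_r with (2 + b); [lra | field_simplify; lra]).
  assert (Hr2 : 0 <= r ^ 2 * (1 - r ^ 2)) by (apply Rmult_le_pos; nra).
  assert (Hs1 : 1 <= s).
  { assert (0 <= b / (2 + b) * (1 - r ^ 2)) by (apply Rmult_le_pos; nra).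
    nra. }
  (* [s^2 r^2 <= r^2 + r^2 (1 - r^2) = 1 - (1 - r^2)^2] *)
  assert (Hrs : r * s <= 1).
  { assert (0 <= (1 - b / (2 + b)) * (r ^ 2 * (1 - r ^ 2)))
      by (apply Rmult_le_pos; lra).
    pose proof (pow2_ge_0 (1 - r ^ 2)).
    assert (r ^ 2 * s ^ 2 <= 1) by (rewrite Hs2; nra).
    nra. }
  split.
  - apply Rmult_le_reg_r with s; [lra|]; field_simplify; nra.
  - apply Rmult_le_reg_r with s; [lra|]; field_simplify; nra.
Qed.

End DecayingCase.

Section GrowingCase.

Variables b a : R.
Hypothesis Hb : b <= -1.
Hypothesis Ha : 1 <= a.

Lemma Lambda_profile_le_end x : 1 <= x <= a ->
  Lambda_profile b a x <= Lambda_profile b a a.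
Proof.
  intros Hx.
  set (c := b + b ^ 2 / 2).
  set (A := b + b ^ 2 - b ^ 2 / 2 * a).
  assert (Hleft : 0 <= c - A * 1).
  { replace (c - A * 1) with (b ^ 2 * (a - 1) / 2) by (unfold c, A; field).
    pose proof (pow2_ge_0 b); nra. }
  assert (Hright : 0 <= c - A * a).
  { replace (c - A * a) with (b * (1 - a) * (1 + b * (1 - a) / 2))
      by (unfold c, A; field).
    assert (0 <= b * (1 - a)) by nra.
    apply Rmult_le_pos; lra. }
  (* an affine function of [x] nonnegative at both ends of [[1, a]] *)
  assert (Hmid : 0 <= c - A * x) by (destruct (Rle_or_lt 0 A); nra).
  assert (E : Lambda_profile b a a - Lambda_profile b a x
              = (a - x) * (c - A * x) / x)
    by (unfold Lambda_profile, c, A; field; lra).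
  assert (0 <= (a - x) * (c - A * x) / x).
  { apply Rle_mult_inv_pos; [apply Rmult_le_pos|]; lra. }
  lra.
Qed.

End GrowingCase.

Theorem proposition2 (T K1 K2 : R) (hT : 0 < T) (hK1 : 0 <= K1)
  (hK2 : K2 <> 0) (hK12 : 0 <= K1 + K2) :
  let beta := K1 / K2 in
  (0 < K2 ->
   let S := sqrt (1 + beta / (2 + beta) * (1 - exp (- (K2 * T / 2)))) in
   is_lub (Lambda_range K1 K2 T)
     ((1 + beta) ^ 2
      - (beta + beta ^ 2 / 2) * S * exp (- (K2 * T / 4))
      - (beta + beta ^ 2 - beta ^ 2 / 2 * exp (- (K2 * T / 2))) / S
        * exp (- (K2 * T / 4)))) /\
  (K2 < 0 ->
   is_lub (Lambda_range K1 K2 T)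
     (/ 2 + / 2 * (1 + K1 / K2 * (1 - exp (- (K2 * T / 2)))) ^ 2)).
Proof.
  intros beta.
  set (r := exp (- (K2 * T / 4))).
  assert (Hr2 : exp (- (K2 * T / 2)) = r ^ 2)
    by (replace (r ^ 2) with (r * r) by ring; unfold r; rewrite <- exp_plus;
        f_equal; field).
  split.
  - intros HK2 S.
    assert (Hb : 0 <= beta) by (apply Rle_mult_inv_pos; lra).
    assert (Hr1 : r <= 1) by (unfold r; rewrite <- exp_0, exp_le_iff; nra).
    assert (Hr : 0 < r) by apply exp_pos.
    set (q := 1 + beta / (2 + beta) * (1 - r ^ 2)).
    assert (Hq : 1 <= q).
    { assert (0 <= beta / (2 + beta) * (1 - r ^ 2))
        by (apply Rmult_le_pos; [apply Rle_mult_inv_pos|]; nra).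
      unfold q; lra. }
    assert (HS2 : S ^ 2 = q) by (unfold S; rewrite Hr2, pow2_sqrt; fold q; lra).
    assert (HS : 0 < S) by (apply sqrt_lt_R0; rewrite Hr2; fold q; lra).
    assert (HA : beta + beta ^ 2 - beta ^ 2 / 2 * r ^ 2
                 = (beta + beta ^ 2 / 2) * S ^ 2)
      by (rewrite HS2; unfold q; field; lra).
    rewrite Hr2, HA.
    replace (_ - _ - _) with ((1 + beta) ^ 2 - 2 * (beta + beta ^ 2 / 2) * S * r)
      by (field; lra).
    apply Lambda_range_lub.
    + intros t Ht; rewrite Lambda_profileE, Hr2 by exact hK2.
      apply (Lambda_profile_le_peak _ _ _ Hb HS2), exp_pos.
    + destruct (exp_decay_onto K2 T (r / S) HK2) as [t [Ht Hx]].
      { rewrite Hr2; exact (peak_in_range _ _ _ Hb Hr HS HS2 Hr1). }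
      exists t; split; [exact Ht|].
      rewrite Lambda_profileE, Hr2, Hx by exact hK2.
      exact (Lambda_profile_peak _ _ _ Hb Hr HS HS2).
  - intros HK2.
    assert (Hb : beta <= -1).
    { assert (beta * K2 = K1) by (unfold beta; field; lra). nra. }
    apply Lambda_range_lub.
    + intros t Ht.
      pose proof (exp_decay_range_neg K2 T t HK2 Ht) as Hx.
      assert (Ha : 1 <= exp (- (K2 * T / 2))) by lra.
      rewrite Lambda_profileE by exact hK2.
      eapply Rle_trans; [exact (Lambda_profile_le_end _ _ Hb Ha _ Hx)|].
      right; unfold Lambda_profile; fold beta; field; lra.
    + exists T; split; [lra|].
      rewrite Lambda_profileE by exact hK2.
      pose proof (exp_pos (- (K2 * T / 2))).
      unfold Lambda_profile; fold beta; field; lra.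
Qed.
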